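(* Let $G$ be a finite GVZ-group with $|\mathrm{cd}(G)|=2$, and let $\phi,\chi\in\mathrm{nl}(G)$. If $[Z(\phi),G]\subseteq\ker\chi$, then $Z(\phi)=Z(\chi)$.
   Context: All groups are finite. $\mathrm{Irr}(G)$ is the set of complex irreducible characters of $G$, $\mathrm{nl}(G)$ the set of non-linear irreducible characters, and $\mathrm{cd}(G)=\{\chi(1):\chi\in\mathrm{Irr}(G)\}$. For a character $\chi$, $Z(\chi)=\{g\in G: |\chi(g)|=\chi(1)\}$. A nonabelian group $G$ is a GVZ-group if for every $\chi\in\mathrm{Irr}(G)$ we have $\chi(g)=0$ for all $g\in G\setminus Z(\chi)$. *)

From mathcomp Require Import all_boot all_order all_algebra all_fingroup all_solvable all_field all_character.
Set Implicit Arguments. Unset Strict Implicit. Unset Printing Implicit Defensive.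
Import GroupScope GRing.Theory Num.Theory.
Local Open Scope ring_scope.

Definition cd (gT : finGroupType) (G : {group gT}) : seq algC :=
  undup [seq 'chi[G]_i 1%g | i <- enum (Iirr G)].

Definition GVZ (gT : finGroupType) (G : {group gT}) : Prop :=
  ~~ abelian G /\
  forall (i : Iirr G) (g : gT), g \in G -> g \notin ('Z('chi[G]_i))%CF -> 'chi[G]_i g = 0.

From mathcomp Require Import all_boot all_order all_algebra all_fingroup all_solvable all_field all_character.
Set Implicit Arguments. Unset Strict Implicit. Unset Printing Implicit Defensive.
Import GroupScope GRing.Theory Num.Theory.
Local Open Scope ring_scope.

(* In a GVZ-group every irreducible character chi satisfies chi(1)^2 = |G : Z(chi)|,
   since chi vanishes off Z(chi).  When cd(G) = {1, d}, all non-linear irreducible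
   characters have degree d, so Z(phi) and Z(chi) have the same index in G.  The
   hypothesis [Z(phi), G] <= ker chi says that Z(phi)/ker chi is central in G/ker chi,
   which is Z(chi)/ker chi; hence Z(phi) <= Z(chi), and equal indices force equality. *)

Lemma seq2_mem_neq_eq (T : eqType) (s : seq T) (a b o : T) :
  size s = 2%N -> uniq s -> a \in s -> b \in s -> o \in s -> a != o -> b != o ->
  a = b.
Proof.
case: s => [|x [|y []]] //= _; rewrite !inE andbT => neq_xy.
by move=> /orP[]/eqP-> /orP[]/eqP-> /orP[]/eqP->; rewrite ?eqxx.
Qed.

Section IrrCenter.

Variables (gT : finGroupType) (G : {group gT}).

Lemma irr1_mem_cd (i : Iirr G) : 'chi[G]_i 1%g \in cd G.
Proof. by rewrite mem_undup; apply/mapP; exists i; rewrite ?mem_enum. Qed.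

Lemma cfcenter_sub_of_commg (i : Iirr G) (A : {group gT}) :
  A \subset G -> [~: A, G] \subset cfker 'chi_i -> A \subset ('Z('chi_i))%CF.
Proof.
move=> sAG sAGker; apply/subsetP=> x Ax.
have Gx := subsetP sAG x Ax.
have nKx := subsetP (normal_norm (cfker_normal 'chi_i)) _ Gx.
rewrite -(quotientGK (cfker_center_normal 'chi_i)) inE nKx inE /=.
rewrite cfcenter_eq_center inE mem_quotient //=.
apply/centP=> _ /morphimP[y nKy Gy ->]; apply/commgP; rewrite -morphR //=.
by rewrite coset_id // (subsetP sAGker) ?mem_commg.
Qed.

Lemma GVZ_irr1_sqr (i : Iirr G) :
  GVZ G -> 'chi_i 1%g ^+ 2 = #|G : 'Z('chi_i)%CF|%:R.
Proof.
move=> [_ chi_vanish]; apply/eqP; rewrite irr1_bound cfun_onE.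
apply/subsetP=> x; rewrite !inE; apply: contraR => notZx.
have [Gx | notGx] := boolP (x \in G); first by rewrite chi_vanish.
by rewrite cfun0.
Qed.

Lemma cd2_nonlinear_irr1_eq (i j : Iirr G) :
  size (cd G) = 2%N ->
  ~~ ('chi_i \is a linear_char) -> ~~ ('chi_j \is a linear_char) ->
  'chi_i 1%g = 'chi_j 1%g.
Proof.
move=> cd2 nlin_i nlin_j.
have irr1_neq1 k : ~~ ('chi[G]_k \is a linear_char) -> 'chi_k 1%g != 1.
  by apply: contra => chi1; rewrite qualifE /= irr_char.
apply: (seq2_mem_neq_eq cd2 (undup_uniq _) (irr1_mem_cd i) (irr1_mem_cd j) (irr1_mem_cd 0));
  by rewrite irr0 cfun11 irr1_neq1.
Qed.

Lemma GVZ_cd2_index_cfcenter_eq (i j : Iirr G) :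
  GVZ G -> size (cd G) = 2%N ->
  ~~ ('chi_i \is a linear_char) -> ~~ ('chi_j \is a linear_char) ->
  #|G : 'Z('chi_i)%CF| = #|G : 'Z('chi_j)%CF|.
Proof.
move=> gvz cd2 nlin_i nlin_j; apply/eqP.
by rewrite -(eqr_nat algC) -!GVZ_irr1_sqr // (cd2_nonlinear_irr1_eq cd2 nlin_i nlin_j).
Qed.

End IrrCenter.

Theorem mainTheorem6 (gT : finGroupType) (G : {group gT}) (p c : Iirr G) :
  GVZ G -> size (cd G) = 2%N ->
  ~~ ('chi[G]_p \is a linear_char) -> ~~ ('chi[G]_c \is a linear_char) ->
  [~: ('Z('chi[G]_p))%CF, G] \subset cfker 'chi[G]_c ->
  ('Z('chi[G]_p))%CF = ('Z('chi[G]_c))%CF.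
Proof.
move=> gvz cd2 nlin_p nlin_c commZp_ker.
have sZpZc := cfcenter_sub_of_commg (cfcenter_sub 'chi_p) commZp_ker.
have := Lagrange_index (cfcenter_sub 'chi_c) sZpZc.
rewrite (GVZ_cd2_index_cfcenter_eq gvz cd2 nlin_p nlin_c).
by rewrite -[RHS]muln1 => /eqP; rewrite eqn_pmul2l ?indexg_gt0 // => /eqP/(index1g sZpZc) ->.
Qed.
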